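(* Let $u_0$ be as in the context and put $K_0:=\sup_{X} y^2e^{-2u_0}|P(z)|^2<\infty$. Then $w_+:=u_0+y$ is a (classical, hence weak) super-solution of $( * )$ on $X$. Moreover, for every constant $C\ge \max\{1,K_0\}$, the continuous function $w_-:=u_0+f_C(y)$ is a weak sub-solution of $( * )$ on $X$, and $u_0\le w_-\le w_+$ on $X$.
   Context: Let $X=\mathbb{R}^2\times(0,+\infty)$ with coordinates $(x_1,x_2,y)$, $z=x_1+ix_2$, $R=\sqrt{|z|^2+y^2}$, and $\Delta=\partial_1^2+\partial_2^2+\partial_y^2$. Let $P(z)$ be a non-zero complex polynomial of degree $N$. Consider the equation $( * )$: $\Delta u+e^{-2u}|P(z)|^2=0$ on $X$. A continuous function $u$ on $X$ is a weak sub-solution (resp. super-solution) of $( * )$ if $\int_X\big(-u\Delta v-e^{-2u}|P|^2v\big)\le 0$ (resp. $\ge 0$) for every non-negative compactly supported smooth $v$ on $X$. Let $u_0$ be a smooth solution of $( * )$ on $X$ (the He–Mazzeo model solution satisfying the generalized Nahm pole boundary condition) with the properties: $\sup_X y\,e^{-u_0}|P(z)|<\infty$, and there are $R_0,K>0$ with $|u_0-N\ln R-\ln y|\le K$ whenever $R\ge R_0$. For $C\ge 1$ define $f_C(y)=0$ for $0<y\le C$ and $f_C(y)=y-C\ln(y/C)-C$ for $y\ge C$. *)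

From Stdlib Require Import Reals Lra List.
From Coquelicot Require Import Coquelicot.
Open Scope R_scope.

(* Functions on R^3 are written curried: f x1 x2 y. X = { y > 0 }. *)
Definition inX (x1 x2 y : R) : Prop := 0 < y.

(* partial derivatives: direction 0 = x1, 1 = x2, otherwise y *)
Definition pd (i : nat) (f : R -> R -> R -> R) : R -> R -> R -> R :=
  match i with
  | O => fun a b c => Derive (fun t => f t b c) a
  | S O => fun a b c => Derive (fun t => f a t c) b
  | _ => fun a b c => Derive (fun t => f a b t) c
  end.

Definition ex_pd (i : nat) (f : R -> R -> R -> R) (a b c : R) : Prop :=
  match i with
  | O => ex_derive (fun t => f t b c) a
  | S O => ex_derive (fun t => f a t c) b
  | _ => ex_derive (fun t => f a b t) c
  end.

Definition iter_pd (l : list nat) (f : R -> R -> R -> R) : R -> R -> R -> R :=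
  fold_right pd f l.

Definition cont3_at (f : R -> R -> R -> R) (a b c : R) : Prop :=
  continuous (fun p : R * R * R => f (fst (fst p)) (snd (fst p)) (snd p)) (a, b, c).

Definition smooth_on (D : R -> R -> R -> Prop) (f : R -> R -> R -> R) : Prop :=
  forall (l : list nat) (a b c : R), D a b c ->
    cont3_at (iter_pd l f) a b c /\
    (forall i, ex_pd i (iter_pd l f) a b c).

Definition Laplacian (f : R -> R -> R -> R) : R -> R -> R -> R :=
  fun a b c => pd 0 (pd 0 f) a b c + pd 1 (pd 1 f) a b c + pd 2 (pd 2 f) a b c.

(* Complex polynomials P(z) = sum_{k=0}^N coef k * z^k, z = x1 + i x2 *)
Fixpoint Cpow (z : C) (n : nat) : C :=
  match n with O => RtoC 1 | S m => Cmult z (Cpow z m) end.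

Fixpoint Peval (coef : nat -> C) (n : nat) (z : C) : C :=
  match n with
  | O => coef O
  | S m => Cplus (Peval coef m z) (Cmult (coef n) (Cpow z n))
  end.

Definition Pabs2 (coef : nat -> C) (N : nat) (x1 x2 : R) : R :=
  (Cmod (Peval coef N (x1, x2))) ^ 2.

(* Nonnegative smooth test function v with compact support contained in the
   box [-M,M] x [-M,M] x [d,M] subset of X (0 < d < M). *)
Definition test_fun (v : R -> R -> R -> R) (M d : R) : Prop :=
  smooth_on (fun _ _ _ => True) v /\
  (forall a b c, 0 <= v a b c) /\
  0 < d < M /\
  (forall a b c, (Rabs a > M \/ Rabs b > M \/ c < d \/ c > M) -> v a b c = 0).

(* integral over X of an integrand supported in the box [-M,M]^2 x [d,M] *)
Definition box_int (g : R -> R -> R -> R) (M d : R) : R :=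
  RInt (fun a => RInt (fun b => RInt (fun c => g a b c) d M) (-M) M) (-M) M.

Definition weak_integrand (coef : nat -> C) (N : nat) (u v : R -> R -> R -> R)
  : R -> R -> R -> R :=
  fun a b c => - u a b c * Laplacian v a b c
               - exp (-2 * u a b c) * Pabs2 coef N a b * v a b c.

Definition continuous_on_X (u : R -> R -> R -> R) : Prop :=
  forall a b c, inX a b c -> cont3_at u a b c.

Definition weak_subsolution (coef : nat -> C) (N : nat) (u : R -> R -> R -> R) : Prop :=
  continuous_on_X u /\
  forall v M d, test_fun v M d -> box_int (weak_integrand coef N u v) M d <= 0.

Definition weak_supersolution (coef : nat -> C) (N : nat) (u : R -> R -> R -> R) : Prop :=
  continuous_on_X u /\
  forall v M d, test_fun v M d -> 0 <= box_int (weak_integrand coef N u v) M d.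

Definition classical_supersolution (coef : nat -> C) (N : nat) (u : R -> R -> R -> R) : Prop :=
  smooth_on inX u /\
  forall a b c, inX a b c -> Laplacian u a b c + exp (-2 * u a b c) * Pabs2 coef N a b <= 0.

Definition is_solution (coef : nat -> C) (N : nat) (u : R -> R -> R -> R) : Prop :=
  smooth_on inX u /\
  forall a b c, inX a b c -> Laplacian u a b c + exp (-2 * u a b c) * Pabs2 coef N a b = 0.

Definition Rnorm3 (a b c : R) : R := sqrt (a ^ 2 + b ^ 2 + c ^ 2).

Definition fC (C0 y : R) : R :=
  if Rle_dec y C0 then 0 else y - C0 * ln (y / C0) - C0.

From Stdlib Require Import Reals Lra List Classical ClassicalEpsilon.
From Coquelicot Require Import Coquelicot.
Import ListNotations.
Open Scope R_scope.

(* Write [w = e^{-2 u0} |P|^2], so that [Lap u0 = -w] for the solution [u0].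
   For [u = u0 + g(y)] and a test function [v] supported in a box
   [-M, M]^2 x [d, M], Green's second identity (the three integrations by
   parts of the divergence of [(du0/dx_i) v - u (dv/dx_i)]) reduces the weak
   form of the equation to the box integral of
        w v (1 - e^{-2g}) + g'(y) dv/dy.
   For [g(y) = y] every vertical fiber integral is [>= 0] (the second term
   integrates to 0), so [w+ = u0 + y] is a weak super-solution; it is also a
   classical one since [Lap y = 0] and [e^{-2y} < 1].  For [g = f_C], where
   [f_C] is the primitive of [max(0, 1 - C/y)] vanishing at [C], the fiber
   integrals are [<= 0]: the integrand vanishes for [y <= C], and for
   [y >= C] the bound [w <= K0 / y^2 <= C / y^2] makes it at most the
   derivative of [(1 - C/y) v], whose integral is [<= 0].  The inequalities
   [0 <= f_C(y) <= y] give [u0 <= w- <= w+]. *)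

Lemma continuous_pair {T U V : UniformSpace} (f : T -> U) (g : T -> V) x :
  continuous f x -> continuous g x -> continuous (fun t => (f t, g t)) x.
Proof.
  intros Hf Hg P [eps HP].
  assert (Hfx := Hf _ (locally_ball (f x) eps)).
  assert (Hgx := Hg _ (locally_ball (g x) eps)).
  unfold filtermap in *; generalize (filter_and _ _ Hfx Hgx).
  apply filter_imp; intros t [Hft Hgt]; apply HP; split; assumption.
Qed.

Lemma ex_RInt_segment (f : R -> R) lo hi :
  lo <= hi -> (forall x, lo <= x <= hi -> continuous f x) -> ex_RInt f lo hi.
Proof.
  intros Hlh Hf; apply (ex_RInt_continuous (V := R_CompleteNormedModule)).
  intros x Hx; rewrite Rmin_left, Rmax_right in Hx by lra; auto.
Qed.

Lemma RInt_plus_R (f g : R -> R) lo hi : ex_RInt f lo hi -> ex_RInt g lo hi ->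
  RInt (fun x => f x + g x) lo hi = RInt f lo hi + RInt g lo hi.
Proof. exact (RInt_plus (V := R_CompleteNormedModule) f g lo hi). Qed.

Lemma RInt_zero lo hi : RInt (fun _ => 0) lo hi = 0.
Proof. rewrite RInt_const; unfold scal; simpl; unfold mult; simpl; ring. Qed.

Lemma RInt_derive_segment (F f : R -> R) lo hi : lo <= hi ->
  (forall x, lo <= x <= hi -> is_derive F x (f x)) ->
  (forall x, lo <= x <= hi -> continuous f x) ->
  RInt f lo hi = F hi - F lo.
Proof.
  intros Hlh HF Hf; apply is_RInt_unique.
  apply (is_RInt_derive (V := R_CompleteNormedModule) F f);
    intros x Hx; rewrite Rmin_left, Rmax_right in Hx by lra; auto.
Qed.

Lemma exp_le_1 x : x <= 0 -> exp x <= 1.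
Proof.
  intro Hx; rewrite <- exp_0; destruct (Rle_lt_or_eq_dec _ _ Hx) as [Hlt | ->];
    [left; apply exp_increasing, Hlt | right; reflexivity].
Qed.

Lemma is_derive_plus_R (f g : R -> R) x df dg :
  is_derive f x df -> is_derive g x dg -> is_derive (fun t => f t + g t) x (df + dg).
Proof. exact (is_derive_plus f g x df dg). Qed.

Lemma is_derive_minus_R (f g : R -> R) x df dg :
  is_derive f x df -> is_derive g x dg -> is_derive (fun t => f t - g t) x (df - dg).
Proof. exact (is_derive_minus f g x df dg). Qed.

Lemma is_derive_mult_R (f g : R -> R) x df dg : is_derive f x df -> is_derive g x dg ->
  is_derive (fun t => f t * g t) x (df * g x + f x * dg).
Proof. intros Hf Hg; apply (is_derive_mult f g); auto; intros; apply Rmult_comm. Qed.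

Lemma is_derive_const_R (k x : R) : is_derive (fun _ : R => k) x 0.
Proof. apply (is_derive_const (V := R_NormedModule)). Qed.

Lemma is_derive_eq (f : R -> R) x l l' : is_derive f x l -> l = l' -> is_derive f x l'.
Proof. intros Hf <-; exact Hf. Qed.

Lemma uniformly_close_param {T : UniformSpace} (h : T -> R -> R) lo hi (p0 : T) :
  (forall p c, lo <= c <= hi -> continuous (fun q : T * R => h (fst q) (snd q)) (p, c)) ->
  forall e : posreal, exists del : posreal, forall p, ball p0 del p ->
    forall x, lo <= x <= hi -> Rabs (h p x - h p0 x) <= 2 * e.
Proof.
  intros Hc e.
  assert (Hloc : forall c, exists del : posreal, lo <= c <= hi ->
     forall p c', ball p0 del p -> Rabs (c' - c) < del -> Rabs (h p c' - h p0 c) < e).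
  { intro c; destruct (classic (lo <= c <= hi)) as [Hin | Hout].
    - destruct (Hc p0 c Hin _ (locally_ball (h p0 c) e)) as [del Hdel].
      exists del; intros _ p c' Hp Hc'; apply (Hdel (p, c')); split; assumption.
    - exists (mkposreal 1 Rlt_0_1); tauto. }
  set (delta := fun c => proj1_sig (constructive_indefinite_description _ (Hloc c))).
  assert (Hdelta : forall c, lo <= c <= hi -> forall p c', ball p0 (delta c) p ->
     Rabs (c' - c) < delta c -> Rabs (h p c' - h p0 c) < e).
  { intro c; exact (proj2_sig (constructive_indefinite_description _ (Hloc c))). }
  destruct (compactness_value_1d lo hi delta) as [del Hcover].
  exists del; intros p Hp x Hx; apply NNPP; intro Hfar.
  apply (Hcover x Hx); intros [t [Ht [Hxt Hdt]]]; apply Hfar.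
  assert (Hpt := Hdelta t Ht p x (ball_le _ _ _ Hdt _ Hp) Hxt).
  assert (Hp0t := Hdelta t Ht p0 x (ball_center _ _) Hxt).
  replace (h p x - h p0 x) with ((h p x - h p0 t) - (h p0 x - h p0 t)) by ring.
  eapply Rle_trans; [apply Rabs_triang | rewrite Rabs_Ropp; lra].
Qed.

Lemma continuous_RInt_param {T : UniformSpace} (h : T -> R -> R) lo hi (p0 : T) :
  lo <= hi ->
  (forall p c, lo <= c <= hi -> continuous (fun q : T * R => h (fst q) (snd q)) (p, c)) ->
  continuous (fun p => RInt (h p) lo hi) p0.
Proof.
  intros Hlh Hc.
  assert (Hint : forall p, ex_RInt (h p) lo hi).
  { intro p; apply ex_RInt_segment; [exact Hlh |]; intros x Hx.
    apply (continuous_comp (fun t : R => (p, t)) (fun q : T * R => h (fst q) (snd q))).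
    - apply continuous_pair; [apply continuous_const | apply continuous_id].
    - apply Hc; exact Hx. }
  apply filterlim_locally; intros eps.
  assert (He : 0 < eps / (2 * (hi - lo) + 2)).
  { apply Rdiv_lt_0_compat; [apply cond_pos | lra]. }
  destruct (uniformly_close_param h lo hi p0 Hc (mkposreal _ He)) as [del Hdel].
  exists del; intros p Hp; simpl in Hdel.
  change (Rabs (RInt (h p) lo hi - RInt (h p0) lo hi) < eps).
  rewrite <- (RInt_minus (V := R_CompleteNormedModule) (h p) (h p0)) by auto.
  eapply Rle_lt_trans.
  { apply abs_RInt_le_const; [exact Hlh | apply (ex_RInt_minus (h p) (h p0)); auto |].
    exact (Hdel p Hp). }
  destruct eps as [eps Heps]; simpl.
  apply Rle_lt_trans with (eps * ((2 * (hi - lo)) / (2 * (hi - lo) + 2))).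
  - right; field; lra.
  - rewrite <- (Rmult_1_r eps) at 2; apply Rmult_lt_compat_l; [lra |].
    apply Rmult_lt_reg_r with (2 * (hi - lo) + 2); [lra |].
    unfold Rdiv; rewrite Rmult_assoc, Rinv_l by lra; lra.
Qed.

Lemma is_derive_RInt_param_halfplane (F DF : R -> R -> R) m lo hi x :
  m < lo -> lo <= hi ->
  (forall u t, m < t -> is_derive (fun z => F z t) u (DF u t)) ->
  (forall u t, m < t -> continuity_2d_pt DF u t) ->
  (forall u, ex_RInt (F u) lo hi) ->
  is_derive (fun z => RInt (F z) lo hi) x (RInt (DF x) lo hi).
Proof.
  intros Hm Hlh HD HC HI.
  assert (Hd := is_derive_RInt_param F lo hi x).
  rewrite Rmin_left, Rmax_right in Hd by lra.
  replace (RInt (DF x) lo hi) with (RInt (fun t => Derive (fun u => F u t) x) lo hi).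
  - apply Hd.
    + apply filter_forall; intros y t Ht; eexists; apply HD; lra.
    + intros t Ht; apply continuity_2d_pt_ext_loc with DF; [| apply HC; lra].
      assert (Hp : 0 < t - m) by lra.
      exists (mkposreal _ Hp); intros u w _ Hw; simpl in Hw.
      symmetry; apply is_derive_unique, HD; apply Rabs_lt_between in Hw; lra.
    + apply filter_forall; intro y; apply HI.
  - apply RInt_ext; intros t Ht; rewrite Rmin_left, Rmax_right in Ht by lra.
    apply is_derive_unique, HD; lra.
Qed.

Lemma continuous_zero_of_close_zeros (h : R -> R) x : continuous h x ->
  (forall eps, 0 < eps -> exists y, Rabs (y - x) < eps /\ h y = 0) -> h x = 0.
Proof.
  intros Hc Hz; apply NNPP; intro Hx.
  assert (Hp : 0 < Rabs (h x)) by (apply Rabs_pos_lt; exact Hx).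
  destruct (proj1 (filterlim_locally h (h x)) Hc (mkposreal _ Hp)) as [del Hdel].
  destruct (Hz del (cond_pos del)) as [y [Hy Hy0]].
  assert (Hb : Rabs (h y - h x) < Rabs (h x)) by exact (Hdel y Hy).
  rewrite Hy0, Rminus_0_l, Rabs_Ropp in Hb; lra.
Qed.

Lemma cont3_at_comp {T : UniformSpace} (f : R -> R -> R -> R) (al be ga : T -> R) x :
  continuous al x -> continuous be x -> continuous ga x ->
  cont3_at f (al x) (be x) (ga x) -> continuous (fun t => f (al t) (be t) (ga t)) x.
Proof.
  intros Ha Hb Hc Hf.
  apply (continuous_comp (fun t => (al t, be t, ga t))
           (fun p : R * R * R => f (fst (fst p)) (snd (fst p)) (snd p))); [| exact Hf].
  repeat apply continuous_pair; assumption.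
Qed.

Section ContinuousOnX.

Variables (f g : R -> R -> R -> R).
Hypotheses (Hf : continuous_on_X f) (Hg : continuous_on_X g).

Lemma continuous_on_X_plus : continuous_on_X (fun a b c => f a b c + g a b c).
Proof.
  intros a b c Hc; apply (continuous_plus (fun p : R * R * R => f _ _ _) (fun p : R * R * R => g _ _ _));
    [apply Hf | apply Hg]; exact Hc.
Qed.

Lemma continuous_on_X_mult : continuous_on_X (fun a b c => f a b c * g a b c).
Proof.
  intros a b c Hc; apply (continuous_mult (fun p : R * R * R => f _ _ _) (fun p : R * R * R => g _ _ _));
    [apply Hf | apply Hg]; exact Hc.
Qed.

Lemma continuous_on_X_opp : continuous_on_X (fun a b c => - f a b c).
Proof. intros a b c Hc; apply (continuous_opp (fun p : R * R * R => f _ _ _)); apply Hf; exact Hc. Qed.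

Lemma continuous_on_X_minus : continuous_on_X (fun a b c => f a b c - g a b c).
Proof.
  intros a b c Hc; apply (continuous_minus (fun p : R * R * R => f _ _ _) (fun p : R * R * R => g _ _ _));
    [apply Hf | apply Hg]; exact Hc.
Qed.

Lemma continuous_on_X_y a b c : 0 < c -> continuous (fun t => f a b t) c.
Proof. intro Hc; apply cont3_at_comp; try apply continuous_const; [apply continuous_id | apply Hf, Hc]. Qed.

Lemma continuity_2d_x1y a b c : 0 < c -> continuity_2d_pt (fun u w => f u b w) a c.
Proof.
  intro Hc; apply continuity_2d_pt_filterlim.
  apply (cont3_at_comp f (@fst R R) (fun _ => b) (@snd R R) (a, c));
    [apply continuous_fst | apply continuous_const | apply continuous_snd | apply Hf, Hc].
Qed.

Lemma continuity_2d_x2y a b c : 0 < c -> continuity_2d_pt (fun u w => f a u w) b c.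
Proof.
  intro Hc; apply continuity_2d_pt_filterlim.
  apply (cont3_at_comp f (fun _ => a) (@fst R R) (@snd R R) (b, c));
    [apply continuous_const | apply continuous_fst | apply continuous_snd | apply Hf, Hc].
Qed.

End ContinuousOnX.

Lemma continuous_on_X_const k : continuous_on_X (fun _ _ _ => k).
Proof. intros a b c _; apply continuous_const. Qed.

Lemma continuous_on_X_of_y (h : R -> R) :
  (forall c, 0 < c -> continuous h c) -> continuous_on_X (fun _ _ c => h c).
Proof.
  intros Hh a b c Hc; unfold cont3_at.
  apply (continuous_comp (fun p : R * R * R => snd p) h); [apply continuous_snd | apply Hh, Hc].
Qed.

Section BoxIntegrability.

Variables (f : R -> R -> R -> R) (M d : R).
Hypotheses (Hf : continuous_on_X f) (Hd : 0 < d < M).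

Lemma continuous_fiber_int (q : R * R) :
  continuous (fun q : R * R => RInt (fun c => f (fst q) (snd q) c) d M) q.
Proof.
  apply (continuous_RInt_param (fun q c => f (fst q) (snd q) c)); [lra |].
  intros [a b] c Hc; apply Hf; red; lra.
Qed.

Lemma ex_RInt_fiber a b : ex_RInt (fun c => f a b c) d M.
Proof. apply ex_RInt_segment; [lra |]; intros c Hc; apply continuous_on_X_y; [exact Hf | lra]. Qed.

Lemma continuous_fiber_int_x2 a b : continuous (fun b => RInt (fun c => f a b c) d M) b.
Proof.
  apply (continuous_comp (fun t : R => (a, t)) (fun q : R * R => RInt (fun c => f (fst q) (snd q) c) d M)).
  - apply continuous_pair; [apply continuous_const | apply continuous_id].
  - apply continuous_fiber_int.
Qed.

Lemma ex_RInt_slab a lo hi : lo <= hi ->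
  ex_RInt (fun b => RInt (fun c => f a b c) d M) lo hi.
Proof. intro Hlh; apply ex_RInt_segment; [exact Hlh |]; intros; apply continuous_fiber_int_x2. Qed.

Lemma continuous_slab_int lo hi a : lo <= hi ->
  continuous (fun a => RInt (fun b => RInt (fun c => f a b c) d M) lo hi) a.
Proof.
  intro Hlh; apply (continuous_RInt_param (fun a b => RInt (fun c => f a b c) d M)); [exact Hlh |].
  intros; apply continuous_fiber_int.
Qed.

Lemma ex_RInt_box lo hi : lo <= hi ->
  ex_RInt (fun a => RInt (fun b => RInt (fun c => f a b c) d M) lo hi) lo hi.
Proof. intro Hlh; apply ex_RInt_segment; [exact Hlh |]; intros; apply continuous_slab_int, Hlh. Qed.

End BoxIntegrability.

Lemma box_int_plus f g M d : continuous_on_X f -> continuous_on_X g -> 0 < d < M ->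
  box_int (fun a b c => f a b c + g a b c) M d = box_int f M d + box_int g M d.
Proof.
  intros Hf Hg Hd; unfold box_int.
  rewrite <- RInt_plus_R by (apply ex_RInt_box; auto; lra).
  apply RInt_ext; intros a _.
  rewrite <- RInt_plus_R by (apply ex_RInt_slab; auto; lra).
  apply RInt_ext; intros b _.
  apply RInt_plus_R; apply ex_RInt_fiber; auto.
Qed.

Lemma box_int_ext f g M d : 0 < d < M ->
  (forall a b c, 0 < c -> f a b c = g a b c) -> box_int f M d = box_int g M d.
Proof.
  intros Hd Hfg; unfold box_int.
  apply RInt_ext; intros a _; apply RInt_ext; intros b _; apply RInt_ext; intros c Hc.
  apply Hfg; rewrite Rmin_left in Hc by lra; lra.
Qed.

Lemma box_int_le f g M d : continuous_on_X f -> continuous_on_X g -> 0 < d < M ->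
  (forall a b, -M <= a <= M -> -M <= b <= M ->
     RInt (fun c => f a b c) d M <= RInt (fun c => g a b c) d M) ->
  box_int f M d <= box_int g M d.
Proof.
  intros Hf Hg Hd Hfib; unfold box_int.
  apply RInt_le; [lra | apply ex_RInt_box; auto; lra | apply ex_RInt_box; auto; lra |].
  intros a Ha; apply RInt_le; [lra | apply ex_RInt_slab; auto; lra | apply ex_RInt_slab; auto; lra |].
  intros b Hb; apply Hfib; lra.
Qed.

Lemma box_int_zero M d : box_int (fun _ _ _ => 0) M d = 0.
Proof.
  unfold box_int; rewrite (RInt_ext _ (fun _ => 0)); [apply RInt_zero |]; intros a _.
  rewrite (RInt_ext _ (fun _ => 0)); [apply RInt_zero |]; intros b _; apply RInt_zero.
Qed.

Lemma box_int_nonpos f M d : continuous_on_X f -> 0 < d < M ->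
  (forall a b, -M <= a <= M -> -M <= b <= M -> RInt (fun c => f a b c) d M <= 0) ->
  box_int f M d <= 0.
Proof.
  intros Hf Hd Hfib; rewrite <- (box_int_zero M d).
  apply box_int_le; [exact Hf | apply continuous_on_X_const | exact Hd |].
  intros a b Ha Hb; rewrite RInt_zero; auto.
Qed.

Lemma box_int_nonneg f M d : continuous_on_X f -> 0 < d < M ->
  (forall a b, -M <= a <= M -> -M <= b <= M -> 0 <= RInt (fun c => f a b c) d M) ->
  0 <= box_int f M d.
Proof.
  intros Hf Hd Hfib; rewrite <- (box_int_zero M d).
  apply box_int_le; [apply continuous_on_X_const | exact Hf | exact Hd |].
  intros a b Ha Hb; rewrite RInt_zero; auto.
Qed.

Lemma box_int_derive_y H DH M d : continuous_on_X DH -> 0 < d < M ->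
  (forall a b c, 0 < c -> is_derive (fun t => H a b t) c (DH a b c)) ->
  (forall a b, -M <= a <= M -> -M <= b <= M -> H a b d = 0 /\ H a b M = 0) ->
  box_int DH M d = 0.
Proof.
  intros HC Hd HD Hface; unfold box_int.
  rewrite (RInt_ext _ (fun _ => 0)); [apply RInt_zero |]; intros a Ha.
  rewrite (RInt_ext _ (fun _ => 0)); [apply RInt_zero |]; intros b Hb.
  rewrite Rmin_left, Rmax_right in Ha, Hb by lra.
  rewrite (RInt_derive_segment (H a b)); [| lra | |].
  - destruct (Hface a b) as [-> ->]; lra.
  - intros c Hc; apply HD; lra.
  - intros c Hc; apply continuous_on_X_y; [exact HC | lra].
Qed.

Lemma box_int_derive_x2 H DH M d : continuous_on_X H -> continuous_on_X DH -> 0 < d < M ->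
  (forall a b c, 0 < c -> is_derive (fun t => H a t c) b (DH a b c)) ->
  (forall a c, d <= c <= M -> H a (-M) c = 0 /\ H a M c = 0) ->
  box_int DH M d = 0.
Proof.
  intros HC0 HC Hd HD Hface; unfold box_int.
  rewrite (RInt_ext _ (fun _ => 0)); [apply RInt_zero |]; intros a _.
  rewrite (RInt_derive_segment (fun b => RInt (fun c => H a b c) d M)); [| lra | |].
  - rewrite (RInt_ext (fun c => H a M c) (fun _ => 0)), (RInt_ext (fun c => H a (-M) c) (fun _ => 0)),
      RInt_zero; [lra | |];
      intros c Hc; rewrite Rmin_left, Rmax_right in Hc by lra; apply Hface; lra.
  - intros b _; apply (is_derive_RInt_param_halfplane (fun u c => H a u c) (fun u c => DH a u c) 0);
      try lra.
    + intros u t Ht; apply HD, Ht.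
    + intros u t Ht; apply continuity_2d_x2y; assumption.
    + intro u; apply ex_RInt_fiber; assumption.
  - intros b _; apply continuous_fiber_int_x2; assumption.
Qed.

Lemma box_int_derive_x1 H DH M d : continuous_on_X H -> continuous_on_X DH -> 0 < d < M ->
  (forall a b c, 0 < c -> is_derive (fun t => H t b c) a (DH a b c)) ->
  (forall b c, d <= c <= M -> H (-M) b c = 0 /\ H M b c = 0) ->
  box_int DH M d = 0.
Proof.
  intros HC0 HC Hd HD Hface; unfold box_int.
  set (G := fun a b => RInt (fun c => H a b c) d M).
  set (DG := fun a b => RInt (fun c => DH a b c) d M).
  assert (HDG : forall a b, is_derive (fun z => G z b) a (DG a b)).
  { intros a b; apply (is_derive_RInt_param_halfplane (fun u c => H u b c) (fun u c => DH u b c) 0);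
      try lra.
    - intros u t Ht; apply HD, Ht.
    - intros u t Ht; apply continuity_2d_x1y; assumption.
    - intro u; apply ex_RInt_fiber; assumption. }
  assert (HG0 : forall a, a = M \/ a = -M -> forall b, G a b = 0).
  { intros a Ha b; unfold G; rewrite <- (RInt_zero d M); apply RInt_ext; intros c Hc.
    rewrite Rmin_left, Rmax_right in Hc by lra; destruct Ha as [-> | ->]; apply Hface; lra. }
  change (RInt (fun a => RInt (DG a) (-M) M) (-M) M = 0).
  rewrite (RInt_derive_segment (fun a => RInt (G a) (-M) M)); [| lra | |].
  - rewrite (RInt_ext (G M) (fun _ => 0)), (RInt_ext (G (-M)) (fun _ => 0)), RInt_zero;
      [lra | |]; intros; apply HG0; auto.
  - intros a _; apply (is_derive_RInt_param_halfplane G DG (-M - 1)); try lra.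
    + intros u t _; apply HDG.
    + intros u t _; apply continuity_2d_pt_filterlim.
      exact (continuous_fiber_int DH M d HC Hd (u, t)).
    + intro u; apply ex_RInt_slab; [assumption | lra | lra].
  - intros a _; apply continuous_slab_int; [assumption | lra | lra].
Qed.

Lemma continuous_zero_of_one_side (h : R -> R) x : continuous h x ->
  (forall y, x < y -> h y = 0) \/ (forall y, y < x -> h y = 0) -> h x = 0.
Proof.
  intros Hc Hside; apply (continuous_zero_of_close_zeros h x Hc); intros eps Heps.
  destruct Hside as [Hr | Hl]; [exists (x + eps / 2) | exists (x - eps / 2)];
    (split; [apply Rabs_lt_between'; lra | first [apply Hr | apply Hl]; lra]).
Qed.

Section SmoothFacts.

Variables (D : R -> R -> R -> Prop) (f : R -> R -> R -> R).
Hypotheses (Hf : smooth_on D f) (HD : forall a b c, inX a b c -> D a b c).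

Lemma smooth_continuous_on_X l : continuous_on_X (iter_pd l f).
Proof. intros a b c Hc; apply (Hf l a b c (HD a b c Hc)). Qed.

Lemma smooth_is_derive_x1 l a b c : 0 < c ->
  is_derive (fun t => iter_pd l f t b c) a (iter_pd (0%nat :: l) f a b c).
Proof. intro Hc; exact (Derive_correct _ _ (proj2 (Hf l a b c (HD a b c Hc)) 0%nat)). Qed.

Lemma smooth_is_derive_x2 l a b c : 0 < c ->
  is_derive (fun t => iter_pd l f a t c) b (iter_pd (1%nat :: l) f a b c).
Proof. intro Hc; exact (Derive_correct _ _ (proj2 (Hf l a b c (HD a b c Hc)) 1%nat)). Qed.

Lemma smooth_is_derive_y l a b c : 0 < c ->
  is_derive (fun t => iter_pd l f a b t) c (iter_pd (2%nat :: l) f a b c).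
Proof. intro Hc; exact (Derive_correct _ _ (proj2 (Hf l a b c (HD a b c Hc)) 2%nat)). Qed.

End SmoothFacts.

Definition outside_box (M d a b c : R) : Prop :=
  Rabs a > M \/ Rabs b > M \/ c < d \/ c > M.

Lemma outside_box_open M d a b c : outside_box M d a b c ->
  exists del, 0 < del /\ forall a' b' c', Rabs (a' - a) < del -> Rabs (b' - b) < del ->
    Rabs (c' - c) < del -> outside_box M d a' b' c'.
Proof.
  intros [Ha | [Hb | [Hc | Hc]]].
  - exists (Rabs a - M); split; [lra |]; intros a' b' c' Ha' _ _; left.
    rewrite Rabs_minus_sym in Ha'; generalize (Rabs_triang_inv a a'); lra.
  - exists (Rabs b - M); split; [lra |]; intros a' b' c' _ Hb' _; right; left.
    rewrite Rabs_minus_sym in Hb'; generalize (Rabs_triang_inv b b'); lra.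
  - exists (d - c); split; [lra |]; intros a' b' c' _ _ Hc'; apply Rabs_lt_between' in Hc'.
    right; right; left; lra.
  - exists (c - M); split; [lra |]; intros a' b' c' _ _ Hc'; apply Rabs_lt_between' in Hc'.
    right; right; right; lra.
Qed.

(* Since the complement of the box is open, all partial derivatives of a
   function vanishing there vanish there as well. *)
Lemma iter_pd_zero_outside_box f M d :
  (forall a b c, outside_box M d a b c -> f a b c = 0) ->
  forall l a b c, outside_box M d a b c -> iter_pd l f a b c = 0.
Proof.
  intros Hf l; induction l as [| i l IH]; intros a b c Hout; [exact (Hf a b c Hout) |].
  destruct (outside_box_open M d a b c Hout) as [del [Hdel Hopen]].
  assert (Hloc : forall x (P : R -> Prop), (forall t, Rabs (t - x) < del -> P t) -> locally x P).
  { intros x P HP; exists (mkposreal del Hdel); exact HP. }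
  assert (H0 : forall x, Rabs (x - x) < del) by (intro x; rewrite Rminus_eq_0, Rabs_R0; exact Hdel).
  destruct i as [| [| i]]; simpl;
    (rewrite (Derive_ext_loc _ (fun _ => 0)); [apply Derive_const |]);
    apply Hloc; intros t Ht; apply IH, Hopen; auto.
Qed.

Section TestFunctionFaces.

Variables (v : R -> R -> R -> R) (M d : R).
Hypothesis (Hv : test_fun v M d).

Let v_zero_outside : forall l a b c, outside_box M d a b c -> iter_pd l v a b c = 0.
Proof. apply iter_pd_zero_outside_box; intros a b c; apply (proj2 (proj2 (proj2 Hv))). Qed.

Let v_cont l a b c : cont3_at (iter_pd l v) a b c.
Proof. exact (proj1 (proj1 Hv l a b c I)). Qed.

Lemma test_fun_zero_x1_faces l b c : iter_pd l v (-M) b c = 0 /\ iter_pd l v M b c = 0.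
Proof.
  destruct Hv as [_ [_ [Hd _]]].
  split; apply (continuous_zero_of_one_side (fun t => iter_pd l v t b c));
    try (apply cont3_at_comp; [apply continuous_id | apply continuous_const | apply continuous_const |
                              apply v_cont]);
    [right | left]; intros y Hy; apply v_zero_outside; left;
    [rewrite Rabs_left | rewrite Rabs_pos_eq]; lra.
Qed.

Lemma test_fun_zero_x2_faces l a c : iter_pd l v a (-M) c = 0 /\ iter_pd l v a M c = 0.
Proof.
  destruct Hv as [_ [_ [Hd _]]].
  split; apply (continuous_zero_of_one_side (fun t => iter_pd l v a t c));
    try (apply cont3_at_comp; [apply continuous_const | apply continuous_id | apply continuous_const |
                              apply v_cont]);
    [right | left]; intros y Hy; apply v_zero_outside; right; left;
    [rewrite Rabs_left | rewrite Rabs_pos_eq]; lra.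
Qed.

Lemma test_fun_zero_y_faces l a b : iter_pd l v a b d = 0 /\ iter_pd l v a b M = 0.
Proof.
  split; apply (continuous_zero_of_one_side (fun t => iter_pd l v a b t));
    try (apply cont3_at_comp; [apply continuous_const | apply continuous_const | apply continuous_id |
                              apply v_cont]);
    [right | left]; intros y Hy; apply v_zero_outside; right; right; [left | right]; lra.
Qed.

End TestFunctionFaces.

Lemma locally_in_X a b c : 0 < c -> locally (a, b, c) (fun p : R * R * R => 0 < snd p).
Proof.
  intro Hc; exists (mkposreal c Hc); intros [[x y] z] [_ Hz]; simpl in *.
  change (Rabs (z - c) < c) in Hz; apply Rabs_lt_between' in Hz; lra.
Qed.

Lemma continuous_on_X_ext f g : (forall a b c, 0 < c -> f a b c = g a b c) ->
  continuous_on_X g -> continuous_on_X f.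
Proof.
  intros Hfg Hg a b c Hc; unfold cont3_at.
  apply (continuous_ext_loc _ (fun p : R * R * R => g (fst (fst p)) (snd (fst p)) (snd p))).
  - generalize (locally_in_X a b c Hc); apply filter_imp; intros p Hp; symmetry; apply Hfg, Hp.
  - apply Hg, Hc.
Qed.

Section SmoothSum.

Variables (f g : R -> R -> R -> R).
Hypotheses (Hf : smooth_on inX f) (Hg : smooth_on inX g).

Lemma iter_pd_plus l a b c : 0 < c ->
  iter_pd l (fun a b c => f a b c + g a b c) a b c = iter_pd l f a b c + iter_pd l g a b c.
Proof.
  revert a b c; induction l as [| i l IH]; intros a b c Hc; [reflexivity |].
  destruct i as [| [| i]]; simpl.
  - rewrite (Derive_ext _ (fun t => iter_pd l f t b c + iter_pd l g t b c)) by (intro; apply IH, Hc).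
    apply Derive_plus; [apply (proj2 (Hf l a b c Hc) 0%nat) | apply (proj2 (Hg l a b c Hc) 0%nat)].
  - rewrite (Derive_ext _ (fun t => iter_pd l f a t c + iter_pd l g a t c)) by (intro; apply IH, Hc).
    apply Derive_plus; [apply (proj2 (Hf l a b c Hc) 1%nat) | apply (proj2 (Hg l a b c Hc) 1%nat)].
  - rewrite (Derive_ext_loc _ (fun t => iter_pd l f a b t + iter_pd l g a b t)).
    + apply Derive_plus; [apply (proj2 (Hf l a b c Hc) 2%nat) | apply (proj2 (Hg l a b c Hc) 2%nat)].
    + exists (mkposreal c Hc); intros t Ht; apply IH.
      change (Rabs (t - c) < c) in Ht; apply Rabs_lt_between' in Ht; lra.
Qed.

Lemma smooth_on_X_plus : smooth_on inX (fun a b c => f a b c + g a b c).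
Proof.
  intros l a b c Hc; split.
  - revert a b c Hc; apply (continuous_on_X_ext _ (fun a b c => iter_pd l f a b c + iter_pd l g a b c)).
    + intros a b c Hc; apply iter_pd_plus, Hc.
    + apply continuous_on_X_plus; [exact (smooth_continuous_on_X inX f Hf (fun _ _ _ H => H) l) |
                                   exact (smooth_continuous_on_X inX g Hg (fun _ _ _ H => H) l)].
  - intro i; destruct i as [| [| i]]; simpl.
    + apply (ex_derive_ext (fun t => iter_pd l f t b c + iter_pd l g t b c));
        [intro; symmetry; apply iter_pd_plus, Hc |].
      apply (ex_derive_plus (fun t => iter_pd l f t b c) (fun t => iter_pd l g t b c));
        [apply (proj2 (Hf l a b c Hc) 0%nat) | apply (proj2 (Hg l a b c Hc) 0%nat)].
    + apply (ex_derive_ext (fun t => iter_pd l f a t c + iter_pd l g a t c));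
        [intro; symmetry; apply iter_pd_plus, Hc |].
      apply (ex_derive_plus (fun t => iter_pd l f a t c) (fun t => iter_pd l g a t c));
        [apply (proj2 (Hf l a b c Hc) 1%nat) | apply (proj2 (Hg l a b c Hc) 1%nat)].
    + apply (ex_derive_ext_loc (fun t => iter_pd l f a b t + iter_pd l g a b t)).
      * exists (mkposreal c Hc); intros t Ht; symmetry; apply iter_pd_plus.
        change (Rabs (t - c) < c) in Ht; apply Rabs_lt_between' in Ht; lra.
      * apply (ex_derive_plus (fun t => iter_pd l f a b t) (fun t => iter_pd l g a b t));
          [apply (proj2 (Hf l a b c Hc) 2%nat) | apply (proj2 (Hg l a b c Hc) 2%nat)].
Qed.

End SmoothSum.

Lemma iter_pd_height_affine l :
  exists al be, forall a b c, iter_pd l (fun _ _ c => c) a b c = al * c + be.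
Proof.
  induction l as [| i l [al [be IH]]]; [exists 1, 0; intros; simpl; ring |].
  destruct i as [| [| i]]; simpl.
  - exists 0, 0; intros a b c; rewrite (Derive_ext _ (fun _ => al * c + be)) by (intro; apply IH).
    rewrite Derive_const; ring.
  - exists 0, 0; intros a b c; rewrite (Derive_ext _ (fun _ => al * c + be)) by (intro; apply IH).
    rewrite Derive_const; ring.
  - exists 0, al; intros a b c; rewrite (Derive_ext _ (fun t => al * t + be)) by (intro; apply IH).
    apply is_derive_unique; auto_derive; [exact I | ring].
Qed.

Lemma smooth_on_X_height : smooth_on inX (fun _ _ c => c).
Proof.
  intros l a b c _; destruct (iter_pd_height_affine l) as [al [be Hl]]; split.
  - unfold cont3_at; apply (continuous_ext (fun p : R * R * R => al * snd p + be));
      [intro; symmetry; apply Hl |].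
    apply (continuous_plus (fun p : R * R * R => al * snd p) (fun _ => be)); [| apply continuous_const].
    apply (continuous_scal_r al (fun p : R * R * R => snd p)); apply continuous_snd.
  - intro i; destruct i as [| [| i]]; simpl;
      [apply (ex_derive_ext (fun _ => al * c + be)) | apply (ex_derive_ext (fun _ => al * c + be)) |
       apply (ex_derive_ext (fun t => al * t + be))];
      try (intro; symmetry; apply Hl); auto_derive; exact I.
Qed.

Lemma Laplacian_height a b c : Laplacian (fun _ _ c => c) a b c = 0.
Proof.
  unfold Laplacian; simpl.
  rewrite !(Derive_ext (fun t => Derive _ _) (fun _ => 0)) by (intro; apply Derive_const).
  rewrite (Derive_ext (fun t => Derive (fun t0 => t0) t) (fun _ => 1)) by (intro; apply Derive_id).
  rewrite !Derive_const; ring.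
Qed.

(* Green's second identity on the box for [u = u0 + g(y)] and a test function
   [v]:  the integral of [v Lap u0 - u Lap v] equals that of [g' dv/dy].  It is
   the vanishing of the integral of the divergence of the field whose
   components are [flux i = (du0/dx_i) v - u (dv/dx_i)], since [v] and its
   derivatives vanish on the faces of the box. *)
Definition flux (i : nat) (u0 : R -> R -> R -> R) (g : R -> R) (v : R -> R -> R -> R)
  : R -> R -> R -> R :=
  fun a b c => pd i u0 a b c * v a b c - (u0 a b c + g c) * pd i v a b c.

Definition green_integrand (u0 : R -> R -> R -> R) (g dg : R -> R) (v : R -> R -> R -> R)
  : R -> R -> R -> R :=
  fun a b c => Laplacian u0 a b c * v a b c - (u0 a b c + g c) * Laplacian v a b c
               - dg c * pd 2 v a b c.

(* For [u = u0 + g(y)] with [u0] a solution, the weak form of the equation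
   reduces (see [weak_integrand_reduction]) to the integral of
   [w v (1 - e^{-2g}) + g' dv/dy], where [w = e^{-2 u0} |P|^2]. *)
Definition reduced_integrand (w : R -> R -> R -> R) (g dg : R -> R) (v : R -> R -> R -> R)
  : R -> R -> R -> R :=
  fun a b c => w a b c * v a b c * (1 - exp (-2 * g c)) + dg c * pd 2 v a b c.

Section Green.

Variables (u0 : R -> R -> R -> R) (g dg : R -> R) (v : R -> R -> R -> R) (M d : R).
Hypotheses (Hu0 : smooth_on inX u0) (Hv : test_fun v M d).
Hypotheses (Hg : forall c, 0 < c -> is_derive g c (dg c)) (Hdg : forall c, 0 < c -> continuous dg c).

Let Hvs : smooth_on (fun _ _ _ => True) v := proj1 Hv.
Let Hd : 0 < d < M := proj1 (proj2 (proj2 Hv)).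
Let cont_u0 l : continuous_on_X (iter_pd l u0) := smooth_continuous_on_X inX u0 Hu0 (fun _ _ _ H => H) l.
Let cont_v l : continuous_on_X (iter_pd l v) := smooth_continuous_on_X _ v Hvs (fun _ _ _ _ => I) l.

Let g_cont c : 0 < c -> continuous g c.
Proof. intro Hc; apply (ex_derive_continuous (V := R_NormedModule)); exists (dg c); apply Hg, Hc. Qed.

Let cont_g : continuous_on_X (fun _ _ c => g c).
Proof. apply continuous_on_X_of_y, g_cont. Qed.

Let cont_dg : continuous_on_X (fun _ _ c => dg c).
Proof. apply continuous_on_X_of_y, Hdg. Qed.

Local Ltac solve_continuous_on_X :=
  repeat match goal with
  | H : continuous_on_X ?f |- continuous_on_X ?f => exact H
  | |- continuous_on_X (pd ?i (pd ?j u0)) => exact (cont_u0 [i; j])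
  | |- continuous_on_X (pd ?i u0) => exact (cont_u0 [i])
  | |- continuous_on_X u0 => exact (cont_u0 [])
  | |- continuous_on_X (pd ?i (pd ?j v)) => exact (cont_v [i; j])
  | |- continuous_on_X (pd ?i v) => exact (cont_v [i])
  | |- continuous_on_X v => exact (cont_v [])
  | |- continuous_on_X (fun a b c => g c) => exact cont_g
  | |- continuous_on_X (fun a b c => dg c) => exact cont_dg
  | |- continuous_on_X (fun a b c => _ - _) => apply continuous_on_X_minus
  | |- continuous_on_X (fun a b c => _ + _) => apply continuous_on_X_plus
  | |- continuous_on_X (fun a b c => _ * _) => apply continuous_on_X_mult
  | |- continuous_on_X (fun a b c => - _) => apply continuous_on_X_opp
  end.

Let u0_derive_x1 l a b c := smooth_is_derive_x1 inX u0 Hu0 (fun _ _ _ H => H) l a b c.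
Let u0_derive_x2 l a b c := smooth_is_derive_x2 inX u0 Hu0 (fun _ _ _ H => H) l a b c.
Let u0_derive_y l a b c := smooth_is_derive_y inX u0 Hu0 (fun _ _ _ H => H) l a b c.
Let v_derive_x1 l a b c := smooth_is_derive_x1 _ v Hvs (fun _ _ _ _ => I) l a b c.
Let v_derive_x2 l a b c := smooth_is_derive_x2 _ v Hvs (fun _ _ _ _ => I) l a b c.
Let v_derive_y l a b c := smooth_is_derive_y _ v Hvs (fun _ _ _ _ => I) l a b c.

Let flux_derive_x1 a b c : 0 < c -> is_derive (fun t => flux 0 u0 g v t b c) a
  (pd 0 (pd 0 u0) a b c * v a b c - (u0 a b c + g c) * pd 0 (pd 0 v) a b c).
Proof.
  intro Hc; eapply is_derive_eq.
  - apply is_derive_minus_R; apply is_derive_mult_R.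
    + exact (u0_derive_x1 [0%nat] a b c Hc).
    + exact (v_derive_x1 [] a b c Hc).
    + apply is_derive_plus_R; [exact (u0_derive_x1 [] a b c Hc) | apply is_derive_const_R].
    + exact (v_derive_x1 [0%nat] a b c Hc).
  - simpl; ring.
Qed.

Let flux_derive_x2 a b c : 0 < c -> is_derive (fun t => flux 1 u0 g v a t c) b
  (pd 1 (pd 1 u0) a b c * v a b c - (u0 a b c + g c) * pd 1 (pd 1 v) a b c).
Proof.
  intro Hc; eapply is_derive_eq.
  - apply is_derive_minus_R; apply is_derive_mult_R.
    + exact (u0_derive_x2 [1%nat] a b c Hc).
    + exact (v_derive_x2 [] a b c Hc).
    + apply is_derive_plus_R; [exact (u0_derive_x2 [] a b c Hc) | apply is_derive_const_R].
    + exact (v_derive_x2 [1%nat] a b c Hc).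
  - simpl; ring.
Qed.

Let flux_derive_y a b c : 0 < c -> is_derive (fun t => flux 2 u0 g v a b t) c
  (pd 2 (pd 2 u0) a b c * v a b c - (u0 a b c + g c) * pd 2 (pd 2 v) a b c
   - dg c * pd 2 v a b c).
Proof.
  intro Hc; eapply is_derive_eq.
  - apply is_derive_minus_R; apply is_derive_mult_R.
    + exact (u0_derive_y [2%nat] a b c Hc).
    + exact (v_derive_y [] a b c Hc).
    + apply is_derive_plus_R; [exact (u0_derive_y [] a b c Hc) | apply Hg, Hc].
    + exact (v_derive_y [2%nat] a b c Hc).
  - simpl; ring.
Qed.

Let flux_zero a b c i :
  v a b c = 0 -> pd i v a b c = 0 -> flux i u0 g v a b c = 0.
Proof. intros Hv0 Hvi; unfold flux; rewrite Hv0, Hvi; ring. Qed.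

Lemma green_identity : box_int (green_integrand u0 g dg v) M d = 0.
Proof.
  assert (Ix1 : box_int (fun a b c =>
    pd 0 (pd 0 u0) a b c * v a b c - (u0 a b c + g c) * pd 0 (pd 0 v) a b c) M d = 0).
  { apply (box_int_derive_x1 (flux 0 u0 g v)); [unfold flux; solve_continuous_on_X |
      solve_continuous_on_X | exact Hd | exact flux_derive_x1 |].
    intros b c _; destruct (test_fun_zero_x1_faces v M d Hv [] b c) as [Hl Hr].
    destruct (test_fun_zero_x1_faces v M d Hv [0%nat] b c) as [Hl' Hr'].
    split; apply flux_zero; assumption. }
  assert (Ix2 : box_int (fun a b c =>
    pd 1 (pd 1 u0) a b c * v a b c - (u0 a b c + g c) * pd 1 (pd 1 v) a b c) M d = 0).
  { apply (box_int_derive_x2 (flux 1 u0 g v)); [unfold flux; solve_continuous_on_X |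
      solve_continuous_on_X | exact Hd | exact flux_derive_x2 |].
    intros a c _; destruct (test_fun_zero_x2_faces v M d Hv [] a c) as [Hl Hr].
    destruct (test_fun_zero_x2_faces v M d Hv [1%nat] a c) as [Hl' Hr'].
    split; apply flux_zero; assumption. }
  assert (Iy : box_int (fun a b c =>
    pd 2 (pd 2 u0) a b c * v a b c - (u0 a b c + g c) * pd 2 (pd 2 v) a b c
    - dg c * pd 2 v a b c) M d = 0).
  { apply (box_int_derive_y (flux 2 u0 g v)); [solve_continuous_on_X | exact Hd | exact flux_derive_y |].
    intros a b _ _; destruct (test_fun_zero_y_faces v M d Hv [] a b) as [Hl Hr].
    destruct (test_fun_zero_y_faces v M d Hv [2%nat] a b) as [Hl' Hr'].
    split; apply flux_zero; assumption. }
  rewrite (box_int_ext _ (fun a b c =>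
    (pd 0 (pd 0 u0) a b c * v a b c - (u0 a b c + g c) * pd 0 (pd 0 v) a b c
     + (pd 1 (pd 1 u0) a b c * v a b c - (u0 a b c + g c) * pd 1 (pd 1 v) a b c))
     + (pd 2 (pd 2 u0) a b c * v a b c - (u0 a b c + g c) * pd 2 (pd 2 v) a b c
        - dg c * pd 2 v a b c))); [| exact Hd | intros; unfold green_integrand, Laplacian; ring].
  rewrite !box_int_plus, Ix1, Ix2, Iy; try ring; try exact Hd; solve_continuous_on_X.
Qed.

Lemma continuous_on_X_green_integrand : continuous_on_X (green_integrand u0 g dg v).
Proof. unfold green_integrand, Laplacian; solve_continuous_on_X. Qed.

Lemma continuous_on_X_reduced_integrand w :
  continuous_on_X w -> continuous_on_X (reduced_integrand w g dg v).
Proof.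
  intro Hw; unfold reduced_integrand.
  assert (Hexp : continuous_on_X (fun _ _ c => 1 - exp (-2 * g c))).
  { apply continuous_on_X_of_y; intros c Hc.
    apply (continuous_minus (fun _ => 1) (fun c => exp (-2 * g c))); [apply continuous_const |].
    apply continuous_exp_comp, (continuous_scal_r (-2) g), g_cont, Hc. }
  solve_continuous_on_X.
Qed.

End Green.

Definition weight (coef : nat -> C) (N : nat) (u0 : R -> R -> R -> R) : R -> R -> R -> R :=
  fun a b c => exp (-2 * u0 a b c) * Pabs2 coef N a b.

Lemma weight_nonneg coef N u0 a b c : 0 <= weight coef N u0 a b c.
Proof. apply Rmult_le_pos; [apply Rlt_le, exp_pos | apply pow2_ge_0]. Qed.

Lemma weight_solution coef N u0 a b c : is_solution coef N u0 -> 0 < c ->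
  weight coef N u0 a b c = - Laplacian u0 a b c.
Proof. intros [_ Hpde] Hc; generalize (Hpde a b c Hc); unfold weight; lra. Qed.

Lemma continuous_on_X_weight coef N u0 : is_solution coef N u0 ->
  continuous_on_X (weight coef N u0).
Proof.
  intro Hsol; apply (continuous_on_X_ext _ (fun a b c => - Laplacian u0 a b c)).
  - intros a b c Hc; apply weight_solution; assumption.
  - destruct Hsol as [Hu0 _].
    assert (Hc := smooth_continuous_on_X inX u0 Hu0 (fun _ _ _ H => H)).
    apply continuous_on_X_opp; unfold Laplacian.
    apply continuous_on_X_plus; [apply continuous_on_X_plus |];
      [exact (Hc [0%nat; 0%nat]) | exact (Hc [1%nat; 1%nat]) | exact (Hc [2%nat; 2%nat])].
Qed.

(* Reduction of the weak form for [u = u0 + g(y)]: add Green's identity,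
   whose integral is zero, and use [Lap u0 = -w]. *)
Lemma weak_integrand_reduction coef N u0 g dg v M d : is_solution coef N u0 ->
  (forall c, 0 < c -> is_derive g c (dg c)) -> (forall c, 0 < c -> continuous dg c) ->
  test_fun v M d ->
  box_int (weak_integrand coef N (fun a b c => u0 a b c + g c) v) M d
  = box_int (reduced_integrand (weight coef N u0) g dg v) M d.
Proof.
  intros Hsol Hg Hdg Hv; assert (Hd := proj1 (proj2 (proj2 Hv))).
  rewrite (box_int_ext _ (fun a b c => green_integrand u0 g dg v a b c
                                      + reduced_integrand (weight coef N u0) g dg v a b c)).
  - rewrite box_int_plus, (green_identity u0 g dg v M d (proj1 Hsol) Hv Hg Hdg); [ring | | | exact Hd].
    + exact (continuous_on_X_green_integrand u0 g dg v M d (proj1 Hsol) Hv Hg Hdg).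
    + exact (continuous_on_X_reduced_integrand g dg v M d Hv Hg Hdg _ (continuous_on_X_weight _ _ _ Hsol)).
  - exact Hd.
  - intros a b c Hc; unfold weak_integrand, green_integrand, reduced_integrand.
    rewrite (weight_solution coef N u0 a b c Hsol Hc).
    replace (-2 * (u0 a b c + g c)) with (-2 * u0 a b c + -2 * g c) by ring.
    rewrite exp_plus.
    replace (exp (-2 * u0 a b c) * exp (-2 * g c) * Pabs2 coef N a b)
      with (weight coef N u0 a b c * exp (-2 * g c)) by (unfold weight; ring).
    rewrite (weight_solution coef N u0 a b c Hsol Hc); ring.
Qed.

Lemma Laplacian_plus f g a b c : smooth_on inX f -> smooth_on inX g -> 0 < c ->
  Laplacian (fun a b c => f a b c + g a b c) a b c = Laplacian f a b c + Laplacian g a b c.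
Proof.
  intros Hf Hg Hc; unfold Laplacian.
  change (iter_pd [0%nat; 0%nat] (fun a b c => f a b c + g a b c) a b c
          + iter_pd [1%nat; 1%nat] (fun a b c => f a b c + g a b c) a b c
          + iter_pd [2%nat; 2%nat] (fun a b c => f a b c + g a b c) a b c
          = iter_pd [0%nat; 0%nat] f a b c + iter_pd [1%nat; 1%nat] f a b c + iter_pd [2%nat; 2%nat] f a b c
          + (iter_pd [0%nat; 0%nat] g a b c + iter_pd [1%nat; 1%nat] g a b c
             + iter_pd [2%nat; 2%nat] g a b c)).
  rewrite !iter_pd_plus by assumption; ring.
Qed.

(* [w+ = u0 + y] is a classical super-solution: its Laplacian is that of [u0],
   while the nonlinear term is multiplied by [e^{-2y} < 1]. *)
Lemma wplus_classical_supersolution coef N u0 : is_solution coef N u0 ->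
  classical_supersolution coef N (fun a b c => u0 a b c + c).
Proof.
  intros Hsol; split.
  - apply smooth_on_X_plus; [exact (proj1 Hsol) | exact smooth_on_X_height].
  - intros a b c Hc; red in Hc.
    rewrite (Laplacian_plus u0 (fun _ _ c => c)), Laplacian_height;
      [| exact (proj1 Hsol) | exact smooth_on_X_height | exact Hc].
    replace (-2 * (u0 a b c + c)) with (-2 * u0 a b c + -2 * c) by ring.
    rewrite exp_plus.
    assert (Hw := weight_solution coef N u0 a b c Hsol Hc).
    assert (Hw0 := weight_nonneg coef N u0 a b c).
    assert (He : exp (-2 * c) < 1) by (rewrite <- exp_0; apply exp_increasing; lra).
    unfold weight in Hw, Hw0.
    replace (exp (-2 * u0 a b c) * exp (-2 * c) * Pabs2 coef N a b)
      with (exp (-2 * u0 a b c) * Pabs2 coef N a b * exp (-2 * c)) by ring.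
    nra.
Qed.

(* One-dimensional form of the super-solution inequality for [w+]: along a
   vertical fiber the reduced integrand has nonnegative integral, as the
   derivative term integrates to [V M - V d = 0]. *)
Lemma wplus_fiber_nonneg (w V DV : R -> R) d M : 0 < d < M ->
  (forall c, 0 < c -> continuous w c) -> (forall c, 0 < c -> continuous V c) ->
  (forall c, 0 < c -> is_derive V c (DV c)) -> (forall c, 0 < c -> continuous DV c) ->
  (forall c, 0 < c -> 0 <= w c) -> (forall c, 0 <= V c) -> V d = 0 -> V M = 0 ->
  0 <= RInt (fun c => w c * V c * (1 - exp (-2 * c)) + 1 * DV c) d M.
Proof.
  intros Hd Cw CV DV_V CDV Hw HV HVd HVM.
  assert (Cexp : forall c, continuous (fun c => 1 - exp (-2 * c)) c).
  { intro c; apply (ex_derive_continuous (V := R_NormedModule)); auto_derive; exact I. }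
  assert (Cprod : forall c, d <= c <= M -> continuous (fun c => w c * V c * (1 - exp (-2 * c))) c).
  { intros c Hc; assert (0 < c) by lra.
    apply (continuous_mult (fun c => w c * V c)); [apply (continuous_mult w V); auto | apply Cexp]. }
  rewrite RInt_plus_R.
  - rewrite (RInt_ext (fun c => 1 * DV c) DV) by (intros; apply Rmult_1_l).
    rewrite (RInt_derive_segment V DV d M), HVd, HVM by (lra || (intros; apply DV_V || apply CDV; lra)).
    replace (0 - 0) with 0 by ring; rewrite Rplus_0_r.
    apply Rle_trans with (RInt (fun _ => 0) d M); [rewrite RInt_zero; lra |].
    apply RInt_le; [lra | apply ex_RInt_const | apply ex_RInt_segment; [lra | exact Cprod] |].
    intros c Hc; apply Rmult_le_pos; [apply Rmult_le_pos; [apply Hw | apply HV]; lra |].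
    assert (exp (-2 * c) < 1) by (rewrite <- exp_0; apply exp_increasing; lra); lra.
  - apply ex_RInt_segment; [lra | exact Cprod].
  - apply ex_RInt_segment; [lra |]; intros c Hc.
    apply (continuous_mult (fun _ => 1) DV); [apply continuous_const | apply CDV; lra].
Qed.

Lemma wplus_weak_supersolution coef N u0 : is_solution coef N u0 ->
  weak_supersolution coef N (fun a b c => u0 a b c + c).
Proof.
  intros Hsol; split.
  - intros a b c Hc; exact (proj1 (proj1 (wplus_classical_supersolution coef N u0 Hsol) [] a b c Hc)).
  - intros v M d Hv.
    assert (Hvs := proj1 Hv); assert (Hd := proj1 (proj2 (proj2 Hv))).
    assert (Hg : forall c, 0 < c -> is_derive (fun c => c) c 1).
    { intros c _; apply (is_derive_id (K := R_AbsRing)). }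
    assert (Hdg : forall c, 0 < c -> continuous (fun _ => 1) c) by (intros; apply continuous_const).
    assert (Cw := continuous_on_X_weight coef N u0 Hsol).
    rewrite (weak_integrand_reduction coef N u0 (fun c => c) (fun _ => 1) v M d Hsol Hg Hdg Hv).
    apply box_int_nonneg; [apply (continuous_on_X_reduced_integrand _ _ v M d Hv); auto | exact Hd |].
    intros a b _ _; unfold reduced_integrand.
    destruct (test_fun_zero_y_faces v M d Hv [] a b) as [Hvd HvM].
    apply wplus_fiber_nonneg; auto.
    + intros c Hc; apply continuous_on_X_y; assumption.
    + intros c Hc; apply (continuous_on_X_y (iter_pd [] v)); [| exact Hc].
      exact (smooth_continuous_on_X _ v Hvs (fun _ _ _ _ => I) []).
    + intros c Hc; exact (smooth_is_derive_y _ v Hvs (fun _ _ _ _ => I) [] a b c Hc).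
    + intros c Hc; apply (continuous_on_X_y (iter_pd [2%nat] v)); [| exact Hc].
      exact (smooth_continuous_on_X _ v Hvs (fun _ _ _ _ => I) [2%nat]).
    + intros c _; apply weight_nonneg.
    + intro c; apply (proj1 (proj2 Hv)).
Qed.

(* The profile [f_C] is the primitive, vanishing at [C], of
   [f_C' = max(0, 1 - C/y)], a continuous function with values in [0, 1]
   on (0, +oo).  Hence [f_C] is C^1 on (0, +oo) and [0 <= f_C(y) <= y]. *)
Definition dfC (C0 c : R) : R := Rmax 0 (1 - C0 / c).

Lemma dfC_below C0 c : 0 < c <= C0 -> dfC C0 c = 0.
Proof.
  intro Hc; apply Rmax_left.
  assert (1 <= C0 / c) by (apply Rmult_le_reg_r with c; [lra | field_simplify; lra]); lra.
Qed.

Lemma dfC_above C0 c : 0 < C0 <= c -> dfC C0 c = 1 - C0 / c.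
Proof.
  intro Hc; apply Rmax_right.
  assert (C0 / c <= 1) by (apply Rmult_le_reg_r with c; [lra | field_simplify; lra]); lra.
Qed.

Lemma dfC_bounds C0 c : 0 < C0 -> 0 < c -> 0 <= dfC C0 c <= 1.
Proof.
  intros HC Hc; destruct (Rle_dec c C0) as [Hle | Hgt].
  - rewrite dfC_below by lra; lra.
  - rewrite dfC_above by lra.
    assert (0 < C0 / c) by (apply Rdiv_lt_0_compat; lra).
    assert (C0 / c <= 1) by (apply Rmult_le_reg_r with c; [lra | field_simplify; lra]); lra.
Qed.

Lemma dfC_continuous C0 c : 0 < c -> continuous (dfC C0) c.
Proof.
  intro Hc.
  assert (Habs : forall t, / 2 * ((1 - C0 / t) + Rabs (1 - C0 / t)) = dfC C0 t).
  { intro t; unfold dfC; destruct (Rle_dec 0 (1 - C0 / t)) as [H0 | H0].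
    - rewrite Rmax_right, Rabs_pos_eq by lra; lra.
    - rewrite Rmax_left, Rabs_left by lra; lra. }
  apply (continuous_ext _ _ c Habs).
  - assert (Hq : continuous (fun t => 1 - C0 / t) c).
    { apply (ex_derive_continuous (V := R_NormedModule)); auto_derive; lra. }
    apply (continuous_scal_r (/ 2) (fun t => (1 - C0 / t) + Rabs (1 - C0 / t))).
    apply (continuous_plus (fun t => 1 - C0 / t) (fun t => Rabs (1 - C0 / t)));
      [exact Hq | apply continuous_Rabs_comp, Hq].
Qed.

Lemma ex_RInt_dfC C0 y : 0 < C0 -> 0 < y -> ex_RInt (dfC C0) C0 y.
Proof.
  intros HC Hy; apply (ex_RInt_continuous (V := R_CompleteNormedModule)); intros z Hz.
  apply dfC_continuous; assert (0 < Rmin C0 y) by (apply Rmin_glb_lt; assumption); lra.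
Qed.

Lemma fC_below C0 y : y <= C0 -> fC C0 y = 0.
Proof. intro Hy; unfold fC; destruct (Rle_dec y C0); [reflexivity | lra]. Qed.

Lemma fC_integral C0 y : 0 < C0 -> 0 < y -> fC C0 y = RInt (dfC C0) C0 y.
Proof.
  intros HC Hy; destruct (Rle_dec y C0) as [Hle | Hgt].
  - rewrite fC_below by exact Hle; rewrite <- (RInt_zero C0 y); apply RInt_ext; intros x Hx.
    rewrite Rmin_right, Rmax_left in Hx by lra; symmetry; apply dfC_below; lra.
  - unfold fC; destruct (Rle_dec y C0) as [Hle | _]; [lra |].
    rewrite (RInt_ext _ (fun t => 1 - C0 / t)) by
      (intros x Hx; rewrite Rmin_left, Rmax_right in Hx by lra; apply dfC_above; lra).
    rewrite (RInt_derive_segment (fun t => t - C0 * ln t)); [| lra | |].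
    + rewrite ln_div by lra; ring.
    + intros x Hx; auto_derive; [lra | field; lra].
    + intros x Hx; apply (ex_derive_continuous (V := R_NormedModule)); auto_derive; lra.
Qed.

Lemma fC_derive C0 c : 0 < C0 -> 0 < c -> is_derive (fC C0) c (dfC C0 c).
Proof.
  intros HC Hc; apply (is_derive_ext_loc (RInt (dfC C0) C0)).
  - exists (mkposreal c Hc); intros t Ht; change (Rabs (t - c) < c) in Ht.
    apply Rabs_lt_between' in Ht; symmetry; apply fC_integral; lra.
  - apply (is_derive_RInt (V := R_NormedModule) _ _ C0); [| apply dfC_continuous, Hc].
    exists (mkposreal c Hc); intros t Ht; change (Rabs (t - c) < c) in Ht.
    apply Rabs_lt_between' in Ht; apply (RInt_correct (V := R_CompleteNormedModule)).
    apply ex_RInt_dfC; lra.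
Qed.

Lemma fC_bounds C0 y : 0 < C0 -> 0 < y -> 0 <= fC C0 y <= y.
Proof.
  intros HC Hy; destruct (Rle_dec y C0) as [Hle | Hgt]; [rewrite fC_below by exact Hle; lra |].
  rewrite fC_integral by assumption.
  assert (Hb : forall x, C0 <= x <= y -> 0 <= dfC C0 x <= 1) by (intros; apply dfC_bounds; lra).
  split.
  - rewrite <- (RInt_zero C0 y); apply RInt_le; [lra | apply ex_RInt_const | apply ex_RInt_dfC; lra |].
    intros x Hx; apply Hb; lra.
  - apply Rle_trans with (RInt (fun _ => 1) C0 y).
    + apply RInt_le; [lra | apply ex_RInt_dfC; lra | apply ex_RInt_const |]; intros x Hx; apply Hb; lra.
    + rewrite RInt_const; unfold scal; simpl; unfold mult; simpl; lra.
Qed.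


Lemma continuous_wminus_fiber_integrand (w V DV : R -> R) C0 c : 0 < C0 -> 0 < c ->
  continuous w c -> continuous V c -> continuous DV c ->
  continuous (fun c => w c * V c * (1 - exp (-2 * fC C0 c)) + dfC C0 c * DV c) c.
Proof.
  intros HC Hc Cw CV CDV.
  apply (continuous_plus (fun c => w c * V c * (1 - exp (-2 * fC C0 c))) (fun c => dfC C0 c * DV c)).
  - apply (continuous_mult (fun c => w c * V c)); [apply (continuous_mult w V); auto |].
    apply (continuous_minus (fun _ => 1) (fun c => exp (-2 * fC C0 c))); [apply continuous_const |].
    apply continuous_exp_comp, (continuous_scal_r (-2) (fC C0)).
    apply (ex_derive_continuous (V := R_NormedModule)); exists (dfC C0 c); apply fC_derive; assumption.
  - apply (continuous_mult (dfC C0) DV); [apply dfC_continuous, Hc | exact CDV].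
Qed.

(* One-dimensional form of the sub-solution inequality for [w-], on the part
   [p, M] of a fiber lying above [C]: there [f_C' = 1 - C/y], the nonlinear
   term is at most [C V / y^2] because [w <= C / y^2], and
   [C V / y^2 + (1 - C/y) V'] is the derivative of [(1 - C/y) V], whose
   integral is [- (1 - C/p) V(p) <= 0] since [V M = 0]. *)
Lemma wminus_fiber_tail (w V DV : R -> R) C0 p M : 0 < C0 <= p -> p <= M ->
  (forall c, 0 < c -> continuous w c) -> (forall c, 0 < c -> continuous V c) ->
  (forall c, 0 < c -> is_derive V c (DV c)) -> (forall c, 0 < c -> continuous DV c) ->
  (forall c, 0 < c -> 0 <= w c <= C0 / (c * c)) -> (forall c, 0 <= V c) -> V M = 0 ->
  RInt (fun c => w c * V c * (1 - exp (-2 * fC C0 c)) + dfC C0 c * DV c) p M <= 0.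
Proof.
  intros Hp HpM Cw CV DV_V CDV Hw HV HVM.
  assert (Cbound : forall c, 0 < c ->
    continuous (fun c => C0 / (c * c) * V c + (1 - C0 / c) * DV c) c).
  { intros c Hc.
    apply (continuous_plus (fun c => C0 / (c * c) * V c) (fun c => (1 - C0 / c) * DV c)).
    - apply (continuous_mult (fun c => C0 / (c * c)) V); [| apply CV, Hc].
      apply (ex_derive_continuous (V := R_NormedModule)); auto_derive; nra.
    - apply (continuous_mult (fun c => 1 - C0 / c) DV); [| apply CDV, Hc].
      apply (ex_derive_continuous (V := R_NormedModule)); auto_derive; lra. }
  assert (Hbound : forall c, p <= c <= M ->
    w c * V c * (1 - exp (-2 * fC C0 c)) + dfC C0 c * DV c
    <= C0 / (c * c) * V c + (1 - C0 / c) * DV c).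
  { intros c Hc; rewrite dfC_above by lra.
    destruct (Hw c ltac:(lra)) as [Hw0 Hw1]; assert (HVc := HV c).
    assert (Hf := fC_bounds C0 c ltac:(lra) ltac:(lra)).
    assert (He : exp (-2 * fC C0 c) <= 1) by (apply exp_le_1; lra).
    assert (He0 := exp_pos (-2 * fC C0 c)).
    assert (w c * V c <= C0 / (c * c) * V c) by (apply Rmult_le_compat_r; lra).
    assert (0 <= w c * V c) by (apply Rmult_le_pos; lra).
    nra. }
  apply Rle_trans with (RInt (fun c => C0 / (c * c) * V c + (1 - C0 / c) * DV c) p M).
  - apply RInt_le; [exact HpM | | | intros c Hc; apply Hbound; lra];
      apply ex_RInt_segment; [exact HpM | intros c Hc; assert (0 < c) by lra; apply continuous_wminus_fiber_integrand; auto; lra |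
                              exact HpM | intros c Hc; apply Cbound; lra].
  - rewrite (RInt_derive_segment (fun c => (1 - C0 / c) * V c)); [| exact HpM | |].
    + rewrite HVM; assert (0 <= 1 - C0 / p) by (rewrite <- dfC_above by lra; apply dfC_bounds; lra).
      assert (HVp := HV p); nra.
    + intros c Hc; eapply is_derive_eq.
      * apply is_derive_mult_R; [auto_derive; [lra | reflexivity] | apply DV_V; lra].
      * simpl; field; lra.
    + intros c Hc; apply Cbound; lra.
Qed.

(* The sub-solution inequality along a whole fiber [d, M]: below [C] the
   reduced integrand vanishes since [f_C = f_C' = 0] there. *)
Lemma wminus_fiber_nonpos (w V DV : R -> R) C0 d M : 0 < d < M -> 0 < C0 ->
  (forall c, 0 < c -> continuous w c) -> (forall c, 0 < c -> continuous V c) ->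
  (forall c, 0 < c -> is_derive V c (DV c)) -> (forall c, 0 < c -> continuous DV c) ->
  (forall c, 0 < c -> 0 <= w c <= C0 / (c * c)) -> (forall c, 0 <= V c) -> V M = 0 ->
  RInt (fun c => w c * V c * (1 - exp (-2 * fC C0 c)) + dfC C0 c * DV c) d M <= 0.
Proof.
  intros Hd HC Cw CV DV_V CDV Hw HV HVM.
  set (F := fun c => w c * V c * (1 - exp (-2 * fC C0 c)) + dfC C0 c * DV c).
  assert (Hbelow : forall c, 0 < c <= C0 -> F c = 0).
  { intros c Hc; unfold F; rewrite fC_below, dfC_below by lra.
    replace (-2 * 0) with 0 by ring; rewrite exp_0; ring. }
  assert (HintF : forall lo hi, 0 < lo <= hi -> ex_RInt F lo hi).
  { intros lo hi Hlh; apply ex_RInt_segment; [lra |]; intros c Hc.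
    assert (0 < c) by lra; apply continuous_wminus_fiber_integrand; auto; lra. }
  destruct (Rle_dec M C0) as [HMC | HMC].
  - right; rewrite <- (RInt_zero d M); apply RInt_ext; intros x Hx.
    rewrite Rmin_left, Rmax_right in Hx by lra; apply Hbelow; lra.
  - set (p := Rmax C0 d).
    assert (Hp : d <= p < M /\ C0 <= p /\ (p = d \/ p = C0)) by (unfold p, Rmax; destruct Rle_dec; lra).
    rewrite <- (RInt_Chasles (V := R_CompleteNormedModule) F d p M) by (apply HintF; lra).
    rewrite (RInt_ext F (fun _ => 0) d p), RInt_zero.
    + change (0 + RInt F p M <= 0); rewrite Rplus_0_l.
      apply wminus_fiber_tail; auto; lra.
    + intros x Hx; rewrite Rmin_left, Rmax_right in Hx by lra; apply Hbelow; lra.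
Qed.

Lemma wminus_weak_subsolution coef N u0 C0 : is_solution coef N u0 -> 0 < C0 ->
  (forall a b c, 0 < c -> c ^ 2 * weight coef N u0 a b c <= C0) ->
  weak_subsolution coef N (fun a b c => u0 a b c + fC C0 c).
Proof.
  intros Hsol HC Hbound.
  assert (Hg : forall c, 0 < c -> is_derive (fC C0) c (dfC C0 c)) by (intros; apply fC_derive; assumption).
  assert (Hdg : forall c, 0 < c -> continuous (dfC C0) c) by (intros; apply dfC_continuous; assumption).
  split.
  - apply continuous_on_X_plus.
    + exact (smooth_continuous_on_X inX u0 (proj1 Hsol) (fun _ _ _ H => H) []).
    + apply continuous_on_X_of_y; intros c Hc.
      apply (ex_derive_continuous (V := R_NormedModule)); exists (dfC C0 c); apply Hg, Hc.
  - intros v M d Hv.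
    assert (Hvs := proj1 Hv); assert (Hd := proj1 (proj2 (proj2 Hv))).
    assert (Cw := continuous_on_X_weight coef N u0 Hsol).
    rewrite (weak_integrand_reduction coef N u0 (fC C0) (dfC C0) v M d Hsol Hg Hdg Hv).
    apply box_int_nonpos; [apply (continuous_on_X_reduced_integrand _ _ v M d Hv); auto | exact Hd |].
    intros a b _ _; unfold reduced_integrand.
    apply wminus_fiber_nonpos; auto.
    + intros c Hc; apply continuous_on_X_y; assumption.
    + intros c Hc; apply (continuous_on_X_y (iter_pd [] v)); [| exact Hc].
      exact (smooth_continuous_on_X _ v Hvs (fun _ _ _ _ => I) []).
    + intros c Hc; exact (smooth_is_derive_y _ v Hvs (fun _ _ _ _ => I) [] a b c Hc).
    + intros c Hc; apply (continuous_on_X_y (iter_pd [2%nat] v)); [| exact Hc].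
      exact (smooth_continuous_on_X _ v Hvs (fun _ _ _ _ => I) [2%nat]).
    + intros c Hc; split; [apply weight_nonneg |].
      apply Rmult_le_reg_r with (c * c); [nra |].
      replace (C0 / (c * c) * (c * c)) with C0 by (field; lra).
      generalize (Hbound a b c Hc); simpl; lra.
    + intro c; apply (proj1 (proj2 Hv)).
    + exact (proj2 (test_fun_zero_y_faces v M d Hv [] a b)).
Qed.

Theorem mainTheorem1
  (N : nat) (coef : nat -> C) (hlead : coef N <> RtoC 0)
  (u0 : R -> R -> R -> R)
  (hsol : is_solution coef N u0)
  (hbd : exists B, forall a b c, inX a b c ->
           c * exp (- u0 a b c) * Cmod (Peval coef N (a, b)) <= B)
  (hasym : exists R0 K, 0 < R0 /\ 0 < K /\
           forall a b c, inX a b c -> R0 <= Rnorm3 a b c ->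
             Rabs (u0 a b c - INR N * ln (Rnorm3 a b c) - ln c) <= K)
  (K0 : R)
  (hK0 : is_lub (fun r => exists a b c, inX a b c /\
                   r = c ^ 2 * exp (-2 * u0 a b c) * Pabs2 coef N a b) K0) :
  let wplus := fun a b c => u0 a b c + c in
  (classical_supersolution coef N wplus /\ weak_supersolution coef N wplus) /\
  (forall C0 : R, 1 <= C0 -> K0 <= C0 ->
     let wminus := fun a b c => u0 a b c + fC C0 c in
     weak_subsolution coef N wminus /\
     (forall a b c, inX a b c ->
        u0 a b c <= wminus a b c /\ wminus a b c <= wplus a b c)).
Proof.
  intro wplus; split.
  - split; [apply wplus_classical_supersolution | apply wplus_weak_supersolution]; exact hsol.
  - intros C0 HC1 HK0C wminus; split.
    + apply wminus_weak_subsolution; [exact hsol | lra |].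
      intros a b c Hc; apply Rle_trans with K0; [| exact HK0C].
      apply (proj1 hK0); exists a, b, c; split; [exact Hc | unfold weight; ring].
    + intros a b c Hc; unfold wminus, wplus.
      assert (HfC := fC_bounds C0 c ltac:(lra) Hc); lra.
Qed.
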